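(* Let $(X,d)$ be a pointed metric space and let $((x_i,y_i))_{i\in I}$ be a Lipschitz interpolating family in $\widetilde X$ for $\mathrm{Lip}_0(X)$ with Lipschitz interpolation constant $M$. Assume that $(f_i)_{i\in I}$ is a Beurling set of functions in $\mathrm{Lip}_0(X)$ for $((x_i,y_i))_{i\in I}$. Then for every $\alpha=(\alpha_i)_{i\in I}\in\ell_\infty(I)$ the series $\sum_{i\in I}\alpha_i f_i(x)$ converges for every $x\in X$, and the map $R:\ell_\infty(I)\to\mathrm{Lip}_0(X)$, $R(\alpha)=\sum_{i\in I}\alpha_i f_i$, is a well-defined bounded linear operator with $\|R\|=M$ and $T\circ R=\mathrm{Id}_{\ell_\infty(I)}$, where $T$ is the Lipschitz interpolating operator of the family.
   Context: All spaces are real. $(X,d)$ is a metric space with base point $0$, $\widetilde{X}=\{(x,y)\in X\times X: x\neq y\}$. $\mathrm{Lip}_0(X)$ is the Banach space of Lipschitz $f:X\to\mathbb{R}$ with $f(0)=0$, normed by $\|f\|=\sup_{(x,y)\in\widetilde X}|f(x)-f(y)|/d(x,y)$. For a family $((x_i,y_i))_{i\in I}$ in $\widetilde X$, its Lipschitz interpolating operator is $T:\mathrm{Lip}_0(X)\to\ell_\infty(I)$, $T(f)=\big((f(x_i)-f(y_i))/d(x_i,y_i)\big)_{i\in I}$; the family is Lipschitz interpolating for $\mathrm{Lip}_0(X)$ if $T$ is surjective, and then its Lipschitz interpolation constant is $M=\inf\{K\geq 1: \forall \alpha\in\ell_\infty(I), \|\alpha\|_\infty\le1,\ \exists f\in\mathrm{Lip}_0(X),\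 \|f\|\le K,\ T(f)=\alpha\}$. A Beurling set of functions in $\mathrm{Lip}_0(X)$ for such a family (with constant $M$) is a family $(f_i)_{i\in I}$ of functions $f_i:X\to\mathbb R$ with $f_i(0)=0$ for all $i$, $(f_i(x_j)-f_i(y_j))/d(x_j,y_j)=\delta_{ij}$ (Kronecker delta) for all $i,j\in I$, and $\sup_{(x,y)\in\widetilde X}\sum_{i\in I}|f_i(x)-f_i(y)|/d(x,y)\leq M$. *)

From HB Require Import structures.
From mathcomp Require Import all_boot all_order all_algebra.
From mathcomp Require Import all_classical all_reals all_analysis.
Set Implicit Arguments. Unset Strict Implicit. Unset Printing Implicit Defensive.
Import Order.TTheory GRing.Theory Num.Theory.
Local Open Scope classical_set_scope.
Local Open Scope ring_scope.

Section Defs.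
Variables (R : realType) (X : Type).

Definition is_metric (d : X -> X -> R) : Prop :=
  [/\ forall u v, 0 <= d u v,
      forall u v, d u v = 0 <-> u = v,
      forall u v, d u v = d v u &
      forall u v w, d u w <= d u v + d v w].

Definition is_Lip0 (d : X -> X -> R) (x0 : X) (f : X -> R) : Prop :=
  f x0 = 0 /\ exists L : R, forall u v, `|f u - f v| <= L * d u v.

Definition lip_norm (d : X -> X -> R) (f : X -> R) : R :=
  sup [set `|f p.1 - f p.2| / d p.1 p.2 | p in [set p : X * X | p.1 <> p.2]].

Variable I : choiceType.

Definition linf_bounded (a : I -> R) : Prop := exists C : R, forall i, `|a i| <= C.

Definition linf_norm (a : I -> R) : R := sup (range (fun i => `|a i|)).

Definition interp_op (d : X -> X -> R) (x y : I -> X) (f : X -> R) : I -> R :=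
  fun i => (f (x i) - f (y i)) / d (x i) (y i).

Definition lip_interpolating (d : X -> X -> R) (x0 : X) (x y : I -> X) : Prop :=
  (forall i, x i <> y i) /\
  forall a, linf_bounded a -> exists f, is_Lip0 d x0 f /\ interp_op d x y f = a.

Definition interp_constant (d : X -> X -> R) (x0 : X) (x y : I -> X) : R :=
  inf [set K : R | 1 <= K /\
         forall a, linf_bounded a -> linf_norm a <= 1 ->
           exists f, [/\ is_Lip0 d x0 f, lip_norm d f <= K & interp_op d x y f = a]].

Definition beurling (d : X -> X -> R) (x0 : X) (x y : I -> X) (M : R)
    (f : I -> X -> R) : Prop :=
  [/\ forall i, f i x0 = 0,
      forall i j, (f i (x j) - f i (y j)) / d (x j) (y j) = (if i == j then 1 else 0) &
      forall u v, u <> v ->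
        (\esum_(i in [set: I]) (`|f i u - f i v| / d u v)%:E <= M%:E)%E].

(* unconditional convergence of sum_{i in I} a i to s (net of finite partial sums) *)
Definition has_sum (a : I -> R) (s : R) : Prop :=
  forall e : R, 0 < e -> exists F0 : set I, finite_set F0 /\
    forall F : set I, finite_set F -> F0 `<=` F -> `|\sum_(i \in F) a i - s| < e.

Definition op_norm (d : X -> X -> R) (Rop : (I -> R) -> X -> R) : R :=
  sup [set lip_norm d (Rop a) | a in [set a | linf_bounded a /\ linf_norm a <= 1]].

End Defs.

(** For u <> v the Beurling condition bounds every finite partial sum of
    (|f_i u - f_i v| / d(u,v))_i by M.  Taking v = 0, where every f_i vanishes,
    the family (a_i f_i z)_i is absolutely summable for bounded a, so
    R a z := sum_i a_i f_i z exists, and the same bound gives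
    Lip(R a) <= ||a||_oo M.  Biorthogonality of (f_i) against the pairs
    (x_j, y_j) gives T (R a) = a.  Hence ||R|| <= M, and ||R|| is itself an
    admissible interpolation constant (it is at least 1 because
    |T (R e_i) i| = 1), so M <= ||R|| by minimality of M. *)
From HB Require Import structures.
From mathcomp Require Import all_boot all_order all_algebra.
From mathcomp Require Import all_classical all_reals all_analysis.
From mathcomp Require Import ring lra.
Import Order.TTheory GRing.Theory Num.Theory.
Local Open Scope classical_set_scope.
Local Open Scope ring_scope.
Set Implicit Arguments. Unset Strict Implicit.

Section UnconditionalSums.
Variables (R : realType) (I : choiceType).
Implicit Types (a b g : I -> R) (F G : set I) (c s t : R).

Lemma ler_fsum a b F : finite_set F -> (forall i, a i <= b i) ->
  \sum_(i \in F) a i <= \sum_(i \in F) b i.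
Proof. by move=> fF ab; rewrite !fsbig_finite //; apply: ler_sum. Qed.

Lemma ler_norm_fsum a F : finite_set F ->
  `|\sum_(i \in F) a i| <= \sum_(i \in F) `|a i|.
Proof. by move=> fF; rewrite !fsbig_finite //; apply: ler_norm_sum. Qed.

Lemma ler_fsum_nneg_subset g F G : (forall i, 0 <= g i) ->
  finite_set G -> F `<=` G -> \sum_(i \in F) g i <= \sum_(i \in G) g i.
Proof.
move=> g0 fG FG; rewrite -(setDUK FG) fsbigU0.
- by rewrite lerDl; apply: fsumr_ge0 => i _.
- exact: sub_finite_set fG.
- exact: finite_setD.
- by move=> i [Fi [_ nFi]].
Qed.

Lemma eq_has_sum a b s : a =1 b -> has_sum a s -> has_sum b s.
Proof. by move=> /funext ->. Qed.

Lemma has_sum_unique a s t : has_sum a s -> has_sum a t -> s = t.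
Proof.
move=> hs ht; apply/eqP; apply/negPn/negP => st.
have e0 : 0 < `|s - t| / 2 by rewrite divr_gt0 // normr_gt0 subr_eq0.
have [F1 [fF1 sF1]] := hs _ e0; have [F2 [fF2 tF2]] := ht _ e0.
have fF : finite_set (F1 `|` F2) by rewrite finite_setU.
have := sF1 _ fF (@subsetUl _ F1 F2); have := tF2 _ fF (@subsetUr _ F1 F2).
set S := \sum_(i \in _) a i; have := ler_distD S s t; rewrite (distrC s S).
by move=> *; lra.
Qed.

Lemma has_sumD a b s t : has_sum a s -> has_sum b t ->
  has_sum (fun i => a i + b i) (s + t).
Proof.
move=> hs ht e e0; have e2 : 0 < e / 2 by rewrite divr_gt0.
have [F1 [fF1 sF1]] := hs _ e2; have [F2 [fF2 tF2]] := ht _ e2.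
exists (F1 `|` F2); split=> [|F fF F12F]; first by rewrite finite_setU.
have := sF1 _ fF (subset_trans (@subsetUl _ F1 F2) F12F).
have := tF2 _ fF (subset_trans (@subsetUr _ F1 F2) F12F).
rewrite fsbig_split //; set A := \sum_(i \in F) a i; set B := \sum_(i \in F) b i.
have -> : A + B - (s + t) = (A - s) + (B - t) by ring.
by have := ler_normD (A - s) (B - t); move=> *; lra.
Qed.

Lemma has_sumZ c a s : has_sum a s -> has_sum (fun i => c * a i) (c * s).
Proof.
move=> hs e e0; have c1 : 0 < `|c| + 1 by rewrite ltr_wpDl.
have [F0 [fF0 sF0]] := hs _ (divr_gt0 e0 c1); exists F0; split=> // F fF F0F.
rewrite -mulr_fsumr -mulrBr normrM.
have := sF0 _ fF F0F; set D := `|_ - s| => De.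
have : `|c| * D <= `|c| * (e / (`|c| + 1)) by rewrite ler_wpM2l // ltW.
suff : `|c| * (e / (`|c| + 1)) < e by lra.
by rewrite mulrA ltr_pdivrMr //; nra.
Qed.

Lemma has_sumB a b s t : has_sum a s -> has_sum b t ->
  has_sum (fun i => a i - b i) (s - t).
Proof.
move=> hs ht; rewrite -mulN1r.
by apply: eq_has_sum (has_sumD hs (has_sumZ (-1) ht)) => i; rewrite mulN1r.
Qed.

Lemma has_sum0 : has_sum (fun _ : I => 0 : R) 0.
Proof.
move=> e e0; exists set0; split=> [|F _ _]; first exact: finite_set0.
by rewrite fsbig1 // subrr normr0.
Qed.

Lemma has_sum_supp1 g i : (forall j, j != i -> g j = 0) -> has_sum g (g i).
Proof.
move=> gi e e0; exists [set i]; split=> [|F fF iF]; first exact: finite_set1.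
rewrite (fsbigD1 i) //; last exact: iF.
by rewrite fsbig1 => [|j [_ /eqP]]; [rewrite /= addr0 subrr normr0 | exact: gi].
Qed.

Lemma has_sum_norm_le a s C : has_sum a s ->
  (forall F, finite_set F -> `|\sum_(i \in F) a i| <= C) -> `|s| <= C.
Proof.
move=> hs aC; apply/ler_addgt0Pr => e e0.
have [F [fF sF]] := hs _ e0; have := sF _ fF (@subset_refl _ F).
have := aC _ fF; have := ler_distD (\sum_(i \in F) a i) s 0.
by rewrite !subr0 distrC; move=> *; lra.
Qed.

Lemma has_sum_nneg_bounded g C : (forall i, 0 <= g i) ->
  (forall F, finite_set F -> \sum_(i \in F) g i <= C) -> exists s, has_sum g s.
Proof.
move=> g0 gC; set E := [set \sum_(i \in F) g i | F in finite_set].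
have supE : has_sup E.
  split; first by exists 0, set0; [exact: finite_set0 | rewrite fsbig_set0].
  by exists C => _ [F fF <-]; exact: gC.
exists (sup E) => e e0; have [_ [F0 fF0 <-] F0e] := sup_adherent e0 supE.
exists F0; split=> // F fF F0F.
have := ler_fsum_nneg_subset g0 fF F0F.
have : \sum_(i \in F) g i <= sup E by apply: ub_le_sup; [case: supE | exists F].
by rewrite ltr_norml; move=> *; apply/andP; split; lra.
Qed.

Lemma has_sum_abs_bounded b C :
  (forall F, finite_set F -> \sum_(i \in F) `|b i| <= C) -> exists s, has_sum b s.
Proof.
move=> bC; have [s1 h1] := has_sum_nneg_bounded (fun i => normr_ge0 (b i)) bC.
have [s2 h2] : exists s, has_sum (fun i => `|b i| - b i) s.
  apply: (has_sum_nneg_bounded (C := C + C)) => [i|F fF].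
    by rewrite subr_ge0 ler_norm.
  apply: (@le_trans _ _ (\sum_(i \in F) (`|b i| + `|b i|))); last first.
    by rewrite fsbig_split //; apply: lerD; apply: bC.
  by apply: ler_fsum => // i; rewrite lerD2l -[X in _ <= X]normrN ler_norm.
by exists (s1 - s2); apply: eq_has_sum (has_sumB h1 h2) => i /=; ring.
Qed.

End UnconditionalSums.

Section LinfNorm.
Variables (R : realType) (I : choiceType).
Implicit Types (a b : I -> R) (c C : R).

Lemma linf_boundedD a b : linf_bounded a -> linf_bounded b ->
  linf_bounded (fun i => a i + b i).
Proof.
move=> [Ca aC] [Cb bC]; exists (Ca + Cb) => i.
exact: le_trans (ler_normD _ _) (lerD (aC i) (bC i)).
Qed.

Lemma linf_boundedZ c a : linf_bounded a -> linf_bounded (fun i => c * a i).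
Proof. by move=> [C aC]; exists (`|c| * C) => i; rewrite normrM ler_wpM2l. Qed.

Lemma linf_norm_ge a i : linf_bounded a -> `|a i| <= linf_norm a.
Proof. by move=> [C aC]; apply: ub_le_sup; [exists C => _ [j _ <-] | exists i]. Qed.

Lemma linf_norm_ge0 a : linf_bounded a -> 0 <= linf_norm a.
Proof.
move=> ba; rewrite /linf_norm.
have [->|/set0P [_ [i _ _]]] := eqVneq (range (fun i => `|a i|)) set0.
  by rewrite sup0.
exact: le_trans (normr_ge0 _) (linf_norm_ge i ba).
Qed.

Lemma linf_norm_le a C : 0 <= C -> (forall i, `|a i| <= C) -> linf_norm a <= C.
Proof.
move=> C0 aC; rewrite /linf_norm.
have [->|/set0P ne] := eqVneq (range (fun i => `|a i|)) set0; first by rewrite sup0.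
by apply: ge_sup ne _ => _ [i _ <-].
Qed.

End LinfNorm.

Section LipschitzNorm.
Variables (R : realType) (X : Type) (d : X -> X -> R).
Hypothesis d_metric : is_metric d.
Implicit Types (g : X -> R) (u v : X) (L : R).

Lemma metric_gt0 u v : u <> v -> 0 < d u v.
Proof.
case: d_metric => d0 dE _ _ uv.
by rewrite lt_def d0 andbT; apply/eqP => /dE.
Qed.

Lemma lip_ratio_ubound g L : (forall u v, `|g u - g v| <= L * d u v) ->
  ubound [set `|g p.1 - g p.2| / d p.1 p.2 | p in [set p : X * X | p.1 <> p.2]] L.
Proof. by move=> gL _ [[u v] /= uv <-]; rewrite ler_pdivrMr ?metric_gt0. Qed.

Lemma lip_norm_le g L u v : u <> v ->
  (forall u v, `|g u - g v| <= L * d u v) -> lip_norm d g <= L.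
Proof.
move=> uv gL; apply: ge_sup (lip_ratio_ubound gL).
by exists (`|g u - g v| / d u v), (u, v).
Qed.

Lemma lip_norm_ge g L u v : (forall u v, `|g u - g v| <= L * d u v) ->
  u <> v -> `|g u - g v| / d u v <= lip_norm d g.
Proof.
move=> gL uv; apply: (ub_le_sup (ex_intro _ L (lip_ratio_ubound gL))).
by exists (u, v).
Qed.

Lemma interp_op_le_lip_norm (I : choiceType) (x y : I -> X) g L i :
  (forall u v, `|g u - g v| <= L * d u v) -> x i <> y i ->
  `|interp_op d x y g i| <= lip_norm d g.
Proof.
move=> gL xy; rewrite /interp_op normrM normfV (gtr0_norm (metric_gt0 xy)).
exact: lip_norm_ge.
Qed.

End LipschitzNorm.

Section BeurlingOperator.
Variables (R : realType) (X : Type) (d : X -> X -> R) (x0 : X).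
Variables (I : choiceType) (x y : I -> X) (M : R) (f : I -> X -> R) (i0 : I).
Hypotheses (d_metric : is_metric d) (xy_neq : forall i, x i <> y i).
Hypothesis f_beurling : beurling d x0 x y M f.
Implicit Types (a b : I -> R) (u v z : X) (c : R).

Lemma beurling_fsum_le u v F : u <> v -> finite_set F ->
  \sum_(i \in F) `|f i u - f i v| / d u v <= M.
Proof.
case: f_beurling => _ _ fM uv fF; rewrite -lee_fin -fsumEFin //.
by apply: le_trans (fM u v uv); apply: esum_ge; exists F.
Qed.

Lemma beurling_const_ge0 : 0 <= M.
Proof. by have := beurling_fsum_le (@xy_neq i0) (finite_set0 I); rewrite fsbig_set0. Qed.

Lemma beurling_fsum_weighted_le a u v F : linf_bounded a -> finite_set F ->
  \sum_(i \in F) `|a i * f i u - a i * f i v| <= linf_norm a * M * d u v.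
Proof.
move=> ba fF; have [<-|uv] := pselect (u = v).
  case: d_metric => _ dE _ _; rewrite (proj2 (dE u u) erefl) mulr0.
  by rewrite fsbig1 // => i _; rewrite subrr normr0.
have duv := metric_gt0 d_metric uv; have a0 := linf_norm_ge0 ba.
apply: (@le_trans _ _ (\sum_(i \in F) linf_norm a * d u v * (`|f i u - f i v| / d u v))).
  apply: ler_fsum => // i; rewrite -mulrBr normrM -mulrA [d u v * _]mulrC.
  by rewrite divfK ?gt_eqF // ler_wpM2r // linf_norm_ge.
rewrite -mulr_fsumr [_ * M * _]mulrAC ler_wpM2l ?mulr_ge0 ?(ltW duv) //.
exact: beurling_fsum_le.
Qed.

(* [xget] returns 0 where the family is not summable, which never happens
   for bounded [a]. *)
Definition beurling_op a z : R := xget 0 [set s | has_sum (fun i => a i * f i z) s].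

Lemma has_sum_beurling_op a z : linf_bounded a ->
  has_sum (fun i => a i * f i z) (beurling_op a z).
Proof.
move=> ba; apply: xgetPex; apply: (has_sum_abs_bounded (C := linf_norm a * M * d z x0)).
move=> F fF; rewrite (eq_fsbigr (fun i => `|a i * f i z - a i * f i x0|)).
  exact: beurling_fsum_weighted_le.
by case: f_beurling => fx0 _ _ i _; rewrite fx0 mulr0 subr0.
Qed.

Lemma beurling_op_unique a z s : linf_bounded a ->
  has_sum (fun i => a i * f i z) s -> beurling_op a z = s.
Proof. by move=> ba; apply: has_sum_unique (has_sum_beurling_op z ba). Qed.

Lemma beurling_op_lipschitz a u v : linf_bounded a ->
  `|beurling_op a u - beurling_op a v| <= linf_norm a * M * d u v.
Proof.
move=> ba; apply: has_sum_norm_le (has_sumB (has_sum_beurling_op u ba)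
  (has_sum_beurling_op v ba)) _ => F fF.
exact: le_trans (ler_norm_fsum _ fF) (beurling_fsum_weighted_le u v ba fF).
Qed.

Lemma beurling_op_Lip0 a : linf_bounded a -> is_Lip0 d x0 (beurling_op a).
Proof.
move=> ba; split; last by exists (linf_norm a * M) => u v; exact: beurling_op_lipschitz.
apply: beurling_op_unique => //; apply: eq_has_sum (has_sum0 I) => i.
by case: f_beurling => fx0 _ _; rewrite fx0 mulr0.
Qed.

Lemma beurling_opD a b : linf_bounded a -> linf_bounded b ->
  beurling_op (fun i => a i + b i) = (fun z => beurling_op a z + beurling_op b z).
Proof.
move=> ba bb; apply/funext => z; apply: beurling_op_unique (linf_boundedD ba bb) _.
apply: eq_has_sum (has_sumD (has_sum_beurling_op z ba) (has_sum_beurling_op z bb)) => i.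
by rewrite mulrDl.
Qed.

Lemma beurling_opZ c a : linf_bounded a ->
  beurling_op (fun i => c * a i) = (fun z => c * beurling_op a z).
Proof.
move=> ba; apply/funext => z; apply: beurling_op_unique (linf_boundedZ c ba) _.
by apply: eq_has_sum (has_sumZ c (has_sum_beurling_op z ba)) => i; rewrite mulrA.
Qed.

Lemma interp_beurling_op a : linf_bounded a -> interp_op d x y (beurling_op a) = a.
Proof.
case: f_beurling => _ f_biorth _ ba; apply/funext => i.
pose g j := a j * (if j == i then 1 else 0).
have gi : has_sum g (a i).
  have -> : a i = g i by rewrite /g eqxx mulr1.
  by apply: has_sum_supp1 => j /negbTE ji; rewrite /g ji mulr0.
rewrite /interp_op mulrC; apply: has_sum_unique (has_sumZ _ (has_sumB
  (has_sum_beurling_op (x i) ba) (has_sum_beurling_op (y i) ba))) (eq_has_sum _ gi).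
by move=> j; rewrite /g -(f_biorth j i); ring.
Qed.

Lemma lip_norm_beurling_op_le a : linf_bounded a ->
  lip_norm d (beurling_op a) <= linf_norm a * M.
Proof.
move=> ba; apply: (lip_norm_le d_metric (@xy_neq i0)) => u v.
exact: beurling_op_lipschitz.
Qed.

Lemma beurling_op_ball_ubound :
  ubound [set lip_norm d (beurling_op a)
          | a in [set a | linf_bounded a /\ linf_norm a <= 1]] M.
Proof.
move=> _ [a [ba a1] <-]; apply: le_trans (lip_norm_beurling_op_le ba) _.
exact: ler_piMl beurling_const_ge0 a1.
Qed.

Lemma op_norm_beurling_op_le : op_norm d beurling_op <= M.
Proof.
apply: ge_sup beurling_op_ball_ubound; exists (lip_norm d (beurling_op (fun=> 0))).
exists (fun=> 0) => //; split; first by exists 0 => i; rewrite normr0.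
by apply: linf_norm_le => // i; rewrite normr0.
Qed.

Lemma lip_norm_beurling_op_le_op_norm a : linf_bounded a -> linf_norm a <= 1 ->
  lip_norm d (beurling_op a) <= op_norm d beurling_op.
Proof.
move=> ba a1; apply: (ub_le_sup (ex_intro _ M beurling_op_ball_ubound)).
by exists a.
Qed.

Lemma op_norm_beurling_op_ge1 : 1 <= op_norm d beurling_op.
Proof.
pose e j : R := if j == i0 then 1 else 0.
have e_le1 j : `|e j| <= 1 by rewrite /e; case: eqP; rewrite ?normr1 ?normr0.
have be : linf_bounded e by exists 1.
apply: le_trans (lip_norm_beurling_op_le_op_norm be (linf_norm_le ler01 e_le1)).
have := interp_op_le_lip_norm d_metric (fun u v => beurling_op_lipschitz u v be)
  (@xy_neq i0).
by rewrite interp_beurling_op // /e eqxx normr1.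
Qed.

Lemma interp_constant_le_op_norm :
  interp_constant d x0 x y <= op_norm d beurling_op.
Proof.
apply: (ge_inf (ex_intro _ 1 _)); first by move=> K [].
split=> [|a ba a1]; first exact: op_norm_beurling_op_ge1.
exists (beurling_op a); split.
- exact: beurling_op_Lip0.
- exact: lip_norm_beurling_op_le_op_norm.
- exact: interp_beurling_op.
Qed.

End BeurlingOperator.

Theorem theorem3p9 (R : realType) (X : Type) (d : X -> X -> R) (x0 : X)
    (I : choiceType) (x y : I -> X) (M : R) (f : I -> X -> R) :
  is_metric d ->
  (exists i : I, True) ->
  lip_interpolating d x0 x y ->
  M = interp_constant d x0 x y ->
  beurling d x0 x y M f ->
  exists Rop : (I -> R) -> X -> R,
    (forall a, linf_bounded a -> forall z, has_sum (fun i => a i * f i z) (Rop a z)) /\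
    (forall a, linf_bounded a -> is_Lip0 d x0 (Rop a)) /\
    (forall a b, linf_bounded a -> linf_bounded b ->
          Rop (fun i => a i + b i) = (fun z => Rop a z + Rop b z)) /\
    (forall (c : R) a, linf_bounded a ->
          Rop (fun i => c * a i) = (fun z => c * Rop a z)) /\
    (exists C : R, forall a, linf_bounded a -> lip_norm d (Rop a) <= C * linf_norm a) /\
    op_norm d Rop = M /\
    (forall a, linf_bounded a -> interp_op d x y (Rop a) = a).
Proof.
move=> d_metric [i0 _] [xy_neq _] M_def f_beurling.
exists (beurling_op f); split; [|split; [|split; [|split; [|split; [|split]]]]].
- move=> a ba z; exact: (has_sum_beurling_op d_metric f_beurling).
- move=> a ba; exact: (beurling_op_Lip0 d_metric f_beurling).
- move=> a b ba bb; exact: (beurling_opD d_metric f_beurling).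
- move=> c a ba; exact: (beurling_opZ d_metric f_beurling).
- exists M => a ba; rewrite mulrC.
  exact: (lip_norm_beurling_op_le i0 d_metric xy_neq f_beurling).
- apply: le_anti; apply/andP; split.
    exact: (op_norm_beurling_op_le i0 d_metric xy_neq f_beurling).
  rewrite [X in X <= _]M_def.
  exact: (interp_constant_le_op_norm i0 d_metric xy_neq f_beurling).
- move=> a ba; exact: (interp_beurling_op d_metric f_beurling).
Qed.
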